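(* Let $(X,*,\circ)$ be a left skew brace and $R,S$ congruences on $X$. The following are equivalent: (1) $[I_R,I_S]=0$; (2) every element of $I_R$ commutes with every element of $I_S$ in $(X,* )$, every element of $I_R$ commutes with every element of $I_S$ in $(X,\circ)$, and $x*y^{-*}*z=x\circ y^{-\circ}\circ z$ for all $x,y,z\in X$ with $x\,R\,y$ and $y\,S\,z$; (3) $[R,S]=0$. In particular the category $\mathsf{SKB}$ of left skew braces satisfies (Huq=Smith).
   Context: A (left) skew brace is a triple $(A,*,\circ)$ with $(A,* )$ and $(A,\circ)$ groups such that $a\circ(b*c)=(a\circ b)*a^{-*}*(a\circ c)$ for all $a,b,c\in A$; $a^{-*}$, $a^{-\circ}$ denote inverses in $(A,* )$, $(A,\circ)$; the two groups share the identity $1$. Morphisms are maps that are homomorphisms for both operations; products are componentwise. A congruence on $X$ is an equivalence relation $R\subseteq X\times X$ that is a sub-skew brace of $X\times X$; $I_R=\{x\in X: x\,R\,1\}$. For sub-skew braces $U,V$ of $X$, $[U,V]=0$ means there exists a skew brace morphism $\varphi\colon U\times V\to X$ with $\varphi(u,1)=u$, $\varphi(1,v)=v$. For congruences $R,S$, let $R\times_X S=\{(x,y,z): xRy,\ ySz\}$ (a sub-skew brace of $X^3$); $[R,S]=0$ means there exists a skew brace morphism $p\colon R\times_XS\to X$ with $p(x,y,y)=x$ whenever $xRy$ and $p(y,y,z)=z$ whenever $ySz$. (Huq=Smith) means: for every skew brace $X$ and all congruences $R,S$ on $X$, $[I_R,I_S]=0$ implies $[R,S]=0$. *)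

From Stdlib Require Import ProofIrrelevance.

Set Implicit Arguments.
Unset Strict Implicit.

(** A (left) skew brace (A, *, o): two groups on the same carrier sharing
    the identity, with  a o (b * c) = (a o b) * a^{-*} * (a o c). *)
Record skew_brace := SkewBrace {
  sb_car :> Type;
  sb_add : sb_car -> sb_car -> sb_car;
  sb_mul : sb_car -> sb_car -> sb_car;
  sb_one : sb_car;
  sb_addinv : sb_car -> sb_car;
  sb_mulinv : sb_car -> sb_car;
  sb_addA : forall a b c, sb_add a (sb_add b c) = sb_add (sb_add a b) c;
  sb_add1l : forall a, sb_add sb_one a = a;
  sb_add1r : forall a, sb_add a sb_one = a;
  sb_addVl : forall a, sb_add (sb_addinv a) a = sb_one;
  sb_addVr : forall a, sb_add a (sb_addinv a) = sb_one;
  sb_mulA : forall a b c, sb_mul a (sb_mul b c) = sb_mul (sb_mul a b) c;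
  sb_mul1l : forall a, sb_mul sb_one a = a;
  sb_mul1r : forall a, sb_mul a sb_one = a;
  sb_mulVl : forall a, sb_mul (sb_mulinv a) a = sb_one;
  sb_mulVr : forall a, sb_mul a (sb_mulinv a) = sb_one;
  sb_brace : forall a b c,
    sb_mul a (sb_add b c) = sb_add (sb_add (sb_mul a b) (sb_addinv a)) (sb_mul a c)
}.

Arguments sb_add {s}.
Arguments sb_mul {s}.
Arguments sb_one {s}.
Arguments sb_addinv {s}.
Arguments sb_mulinv {s}.

Definition sb_hom (A B : skew_brace) (f : A -> B) : Prop :=
  forall a b, f (sb_add a b) = sb_add (f a) (f b) /\
              f (sb_mul a b) = sb_mul (f a) (f b).

Definition prod_sb (A B : skew_brace) : skew_brace.
Proof.
refine (@SkewBrace (A * B)%type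
  (fun p q => (sb_add (fst p) (fst q), sb_add (snd p) (snd q)))
  (fun p q => (sb_mul (fst p) (fst q), sb_mul (snd p) (snd q)))
  (sb_one, sb_one)
  (fun p => (sb_addinv (fst p), sb_addinv (snd p)))
  (fun p => (sb_mulinv (fst p), sb_mulinv (snd p)))
  _ _ _ _ _ _ _ _ _ _ _);
 intros; simpl;
 repeat match goal with p : (_ * _)%type |- _ => destruct p end; simpl;
 first [ rewrite !sb_addA | rewrite !sb_add1l | rewrite !sb_add1r
       | rewrite !sb_addVl | rewrite !sb_addVr | rewrite !sb_mulA
       | rewrite !sb_mul1l | rewrite !sb_mul1r | rewrite !sb_mulVl
       | rewrite !sb_mulVr | rewrite !sb_brace ]; reflexivity.
Defined.

Record is_sub (A : skew_brace) (P : A -> Prop) : Prop := IsSub {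
  sub_one : P sb_one;
  sub_add : forall a b, P a -> P b -> P (sb_add a b);
  sub_mul : forall a b, P a -> P b -> P (sb_mul a b);
  sub_addinv : forall a, P a -> P (sb_addinv a);
  sub_mulinv : forall a, P a -> P (sb_mulinv a)
}.

Arguments is_sub : clear implicits.
Arguments sub_one {A P}.
Arguments sub_add {A P} _ {a b}.
Arguments sub_mul {A P} _ {a b}.
Arguments sub_addinv {A P} _ {a}.
Arguments sub_mulinv {A P} _ {a}.

Lemma sig_eq_val (T : Type) (P : T -> Prop) (x y : {t | P t}) :
  proj1_sig x = proj1_sig y -> x = y.
Proof.
destruct x as [x hx], y as [y hy]; simpl; intros ->.
f_equal; apply proof_irrelevance.
Qed.

Definition sub_sb (A : skew_brace) (P : A -> Prop) (h : is_sub A P) : skew_brace.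
Proof.
refine (@SkewBrace {x : A | P x}
  (fun x y => exist _ (sb_add (proj1_sig x) (proj1_sig y))
                 (sub_add h (proj2_sig x) (proj2_sig y)))
  (fun x y => exist _ (sb_mul (proj1_sig x) (proj1_sig y))
                 (sub_mul h (proj2_sig x) (proj2_sig y)))
  (exist _ sb_one (sub_one h))
  (fun x => exist _ (sb_addinv (proj1_sig x)) (sub_addinv h (proj2_sig x)))
  (fun x => exist _ (sb_mulinv (proj1_sig x)) (sub_mulinv h (proj2_sig x)))
  _ _ _ _ _ _ _ _ _ _ _);
 intros; apply sig_eq_val; simpl;
 first [ apply sb_addA | apply sb_add1l | apply sb_add1r
       | apply sb_addVl | apply sb_addVr | apply sb_mulA
       | apply sb_mul1l | apply sb_mul1r | apply sb_mulVl
       | apply sb_mulVr | apply sb_brace ].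
Defined.

Definition congruence (X : skew_brace) (R : X -> X -> Prop) : Prop :=
  (forall x, R x x) /\ (forall x y, R x y -> R y x) /\
  (forall x y z, R x y -> R y z -> R x z) /\
  is_sub (prod_sb X X) (fun p => R (fst p) (snd p)).

Definition I_of (X : skew_brace) (R : X -> X -> Prop) : X -> Prop :=
  fun x => R x sb_one.

Definition huq_comm (X : skew_brace) (U V : X -> Prop) : Prop :=
  exists (hU : is_sub X U) (hV : is_sub X V)
         (phi : prod_sb (sub_sb hU) (sub_sb hV) -> X),
    sb_hom phi /\
    (forall u : sub_sb hU, phi (u, sb_one) = proj1_sig u) /\
    (forall v : sub_sb hV, phi (sb_one, v) = proj1_sig v).

Definition RxS (X : skew_brace) (R S : X -> X -> Prop)
  : prod_sb (prod_sb X X) X -> Prop :=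
  fun t => R (fst (fst t)) (snd (fst t)) /\ S (snd (fst t)) (snd t).

Definition smith_comm (X : skew_brace) (R S : X -> X -> Prop) : Prop :=
  exists (h : is_sub (prod_sb (prod_sb X X) X) (RxS R S))
         (p : sub_sb h -> X),
    sb_hom p /\
    (forall t : sub_sb h,
       snd (fst (proj1_sig t)) = snd (proj1_sig t) ->
       p t = fst (fst (proj1_sig t))) /\
    (forall t : sub_sb h,
       fst (fst (proj1_sig t)) = snd (fst (proj1_sig t)) ->
       p t = snd (proj1_sig t)).

Definition cond2 (X : skew_brace) (R S : X -> X -> Prop) : Prop :=
  (forall a b, I_of R a -> I_of S b -> sb_add a b = sb_add b a) /\
  (forall a b, I_of R a -> I_of S b -> sb_mul a b = sb_mul b a) /\
  (forall x y z, R x y -> S y z ->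
     sb_add (sb_add x (sb_addinv y)) z = sb_mul (sb_mul x (sb_mulinv y)) z).

Definition huq_eq_smith : Prop :=
  forall (X : skew_brace) (R S : X -> X -> Prop),
    congruence R -> congruence S ->
    huq_comm (I_of R) (I_of S) -> smith_comm R S.


Set Implicit Arguments.
Unset Strict Implicit.

(** All three conditions amount to the statement that, for [a] in [I_R] and
    [b] in [I_S], the four products [a * b], [b * a], [a o b], [b o a]
    coincide.  A Huq (resp. Smith) commutator morphism sends the commuting
    pair [(a,1)], [(1,b)] (resp. [(a,1,1)], [(1,1,b)]) to [a] and [b], which
    forces this.  Conversely [(u,v) |-> u * v] is then a Huq morphism, and
    [(x,y,z) |-> x * y^{-*} * z] a Smith morphism: it is additive by the
    Mal'tsev identity for [*], and it also equals [x o y^{-o} o z], hence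
    is multiplicative by the same identity for [o]. *)

Record is_group (G : Type) (op : G -> G -> G) (e : G) (inv : G -> G) : Prop :=
  IsGroup {
    grpA : forall a b c, op a (op b c) = op (op a b) c;
    grp1l : forall a, op e a = a;
    grp1r : forall a, op a e = a;
    grpVl : forall a, op (inv a) a = e;
    grpVr : forall a, op a (inv a) = e
  }.

Section Group.
Variables (G : Type) (op : G -> G -> G) (e : G) (inv : G -> G).
Hypothesis hG : is_group op e inv.
Local Infix "·" := op (at level 40, left associativity).

Lemma inv_e : inv e = e.
Proof. rewrite <- (grp1r hG (inv e)). apply (grpVl hG). Qed.

Lemma opKg (x y : G) : inv x · (x · y) = y.
Proof. rewrite (grpA hG), (grpVl hG). apply (grp1l hG). Qed.

Lemma opKVg (x y : G) : x · (inv x · y) = y.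
Proof. rewrite (grpA hG), (grpVr hG). apply (grp1l hG). Qed.

Lemma opgKV (x y : G) : y · inv x · x = y.
Proof. rewrite <- (grpA hG), (grpVl hG). apply (grp1r hG). Qed.

Lemma inv_uniq (a w : G) : a · w = e -> w = inv a.
Proof.
intro H. rewrite <- (grp1l hG w), <- (grpVl hG a), <- (grpA hG), H.
apply (grp1r hG).
Qed.

Lemma inv_op (a b : G) : inv (a · b) = inv b · inv a.
Proof.
symmetry; apply inv_uniq.
rewrite (grpA hG), <- (grpA hG a b), (grpVr hG), (grp1r hG). apply (grpVr hG).
Qed.

Lemma op_interchange (a b c d : G) : b · c = c · b -> a · b · (c · d) = a · c · (b · d).
Proof.
intro H. rewrite (grpA hG), <- (grpA hG a b c), H, (grpA hG). symmetry; apply (grpA hG).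
Qed.

Lemma malcev_op (x y z x' y' z' : G) :
  (inv y · z) · (x' · inv y') = (x' · inv y') · (inv y · z) ->
  x · inv y · z · (x' · inv y' · z') = x · x' · inv (y · y') · (z · z').
Proof.
intro H. rewrite <- (grpA hG x (inv y) z), (op_interchange _ _ H), (inv_op y y').
rewrite !(grpA hG). reflexivity.
Qed.

End Group.

Local Infix "⊕" := sb_add (at level 50, left associativity).
Local Infix "⊙" := sb_mul (at level 40, left associativity).

Lemma sb_add_group (X : skew_brace) : is_group (@sb_add X) sb_one sb_addinv.
Proof.
exact (IsGroup (@sb_addA X) (@sb_add1l X) (@sb_add1r X) (@sb_addVl X) (@sb_addVr X)).
Qed.

Lemma sb_mul_group (X : skew_brace) : is_group (@sb_mul X) sb_one sb_mulinv.
Proof.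
exact (IsGroup (@sb_mulA X) (@sb_mul1l X) (@sb_mul1r X) (@sb_mulVl X) (@sb_mulVr X)).
Qed.

Lemma sb_mulDr_absorb (X : skew_brace) (c y b : X) :
  c ⊕ b = c ⊙ b -> c ⊙ (y ⊕ b) = c ⊙ y ⊕ b.
Proof.
intro H. rewrite sb_brace, <- H, <- sb_addA. f_equal. apply (opKg (sb_add_group X)).
Qed.

Definition sb_commute (X : skew_brace) (a b : X) : Prop :=
  a ⊕ b = b ⊕ a /\ a ⊙ b = b ⊙ a /\ a ⊕ b = a ⊙ b.

Definition centralizes (X : skew_brace) (U V : X -> Prop) : Prop :=
  forall a b, U a -> V b -> sb_commute a b.

Lemma sb_commute_1l (X : skew_brace) (b : X) : sb_commute sb_one b.
Proof.
unfold sb_commute. rewrite sb_add1l, sb_add1r, sb_mul1l, sb_mul1r. auto.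
Qed.

Lemma sb_commute_1r (X : skew_brace) (a : X) : sb_commute a sb_one.
Proof.
unfold sb_commute. rewrite sb_add1l, sb_add1r, sb_mul1l, sb_mul1r. auto.
Qed.

Lemma sb_commute_prod (A B : skew_brace) (a1 b1 : A) (a2 b2 : B) :
  sb_commute a1 b1 -> sb_commute a2 b2 ->
  sb_commute (X := prod_sb A B) (a1, a2) (b1, b2).
Proof.
intros [E1 [F1 G1]] [E2 [F2 G2]]. repeat split; simpl; f_equal; assumption.
Qed.

Lemma sb_commute_sub (A : skew_brace) (P : A -> Prop) (h : is_sub A P)
  (u v : sub_sb h) :
  sb_commute (proj1_sig u) (proj1_sig v) -> sb_commute u v.
Proof.
intros [E [F G]]. repeat split; apply sig_eq_val; assumption.
Qed.

Lemma sb_commute_hom (A B : skew_brace) (f : A -> B) (a b : A) :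
  sb_hom f -> sb_commute a b -> sb_commute (f a) (f b).
Proof.
intros hf [E [F G]].
repeat split; rewrite <- ?(proj1 (hf _ _)), <- ?(proj2 (hf _ _)); f_equal; assumption.
Qed.

Section Congruence.
Variables (X : skew_brace) (R : X -> X -> Prop).
Hypothesis hR : congruence R.

Lemma cong_refl (x : X) : R x x.
Proof. apply (proj1 hR). Qed.

Lemma cong_sym (x y : X) : R x y -> R y x.
Proof. apply (proj1 (proj2 hR)). Qed.

Let cong_sub : is_sub (prod_sb X X) (fun p => R (fst p) (snd p)) :=
  proj2 (proj2 (proj2 hR)).

Lemma cong_add (x y x' y' : X) : R x y -> R x' y' -> R (x ⊕ x') (y ⊕ y').
Proof. exact (sub_add cong_sub (a := (x, y)) (b := (x', y'))). Qed.

Lemma cong_mul (x y x' y' : X) : R x y -> R x' y' -> R (x ⊙ x') (y ⊙ y').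
Proof. exact (sub_mul cong_sub (a := (x, y)) (b := (x', y'))). Qed.

Lemma cong_addinv (x y : X) : R x y -> R (sb_addinv x) (sb_addinv y).
Proof. exact (sub_addinv cong_sub (a := (x, y))). Qed.

Lemma cong_mulinv (x y : X) : R x y -> R (sb_mulinv x) (sb_mulinv y).
Proof. exact (sub_mulinv cong_sub (a := (x, y))). Qed.

Lemma I_of_sub : is_sub X (I_of R).
Proof.
unfold I_of; constructor; intros.
- apply cong_refl.
- rewrite <- (sb_add1l sb_one). apply cong_add; assumption.
- rewrite <- (sb_mul1l sb_one). apply cong_mul; assumption.
- rewrite <- (inv_e (sb_add_group X)). apply cong_addinv; assumption.
- rewrite <- (inv_e (sb_mul_group X)). apply cong_mulinv; assumption.
Qed.

Lemma I_of_addV (x y : X) : R x y -> I_of R (x ⊕ sb_addinv y).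
Proof.
intro H; unfold I_of. rewrite <- (sb_addVr y). apply cong_add; [assumption | apply cong_refl].
Qed.

Lemma I_of_mulV (x y : X) : R x y -> I_of R (x ⊙ sb_mulinv y).
Proof.
intro H; unfold I_of. rewrite <- (sb_mulVr y). apply cong_mul; [assumption | apply cong_refl].
Qed.

Lemma I_of_Vadd (y z : X) : R y z -> I_of R (sb_addinv y ⊕ z).
Proof.
intro H; unfold I_of. apply cong_sym. rewrite <- (sb_addVl y).
apply cong_add; [apply cong_refl | assumption].
Qed.

Lemma I_of_Vmul (y z : X) : R y z -> I_of R (sb_mulinv y ⊙ z).
Proof.
intro H; unfold I_of. apply cong_sym. rewrite <- (sb_mulVl y).
apply cong_mul; [apply cong_refl | assumption].
Qed.

End Congruence.

Lemma huq_comm_centralizes (X : skew_brace) (U V : X -> Prop) :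
  huq_comm U V -> centralizes U V.
Proof.
intros [hU [hV [phi [hphi [phi_l phi_r]]]]] a b Ha Hb.
pose proof (sb_commute_hom hphi
  (sb_commute_prod (sb_commute_1r (exist _ a Ha : sub_sb hU))
                   (sb_commute_1l (exist _ b Hb : sub_sb hV)))) as H.
rewrite phi_l, phi_r in H. exact H.
Qed.

Lemma centralizes_huq_comm (X : skew_brace) (U V : X -> Prop)
  (hU : is_sub X U) (hV : is_sub X V) :
  centralizes U V -> huq_comm U V.
Proof.
intro hc. exists hU, hV.
exists (fun p : prod_sb (sub_sb hU) (sub_sb hV) => proj1_sig (fst p) ⊕ proj1_sig (snd p)).
split; [| split; intros; simpl; [apply sb_add1r | apply sb_add1l]].
intros [[u Hu] [v Hv]] [[u' Hu'] [v' Hv']]; simpl. split.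
- apply (op_interchange (sb_add_group X)). apply (proj1 (hc _ _ Hu' Hv)).
- destruct (hc _ _ Hu Hv) as [_ [_ ->]], (hc _ _ Hu' Hv') as [_ [_ ->]].
  destruct (hc _ _ (sub_mul hU Hu Hu') (sub_mul hV Hv Hv')) as [_ [_ ->]].
  apply (op_interchange (sb_mul_group X)). apply (proj1 (proj2 (hc _ _ Hu' Hv))).
Qed.

Section TwoCongruences.
Variables (X : skew_brace) (R S : X -> X -> Prop).
Hypotheses (hR : congruence R) (hS : congruence S).

Lemma cond2_centralizes : cond2 R S <-> centralizes (I_of R) (I_of S).
Proof.
split.
- intros [Hadd [Hmul Hmalcev]] a b Ha Hb. repeat split; auto.
  specialize (Hmalcev a sb_one b Ha (cong_sym hS Hb)).
  rewrite (inv_e (sb_add_group X)), (inv_e (sb_mul_group X)), sb_add1r, sb_mul1r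
    in Hmalcev.
  exact Hmalcev.
- intro hc. split; [| split]; [intros a b Ha Hb; apply hc; assumption .. |].
  intros x y z Hxy Hyz.
  (* With [c = x o y^{-o}] in [I_R] and [b = y^{-*} * z] in [I_S]:
     [c o z = c o (y * b) = (c o y) * b = x * b], as [c * b = c o b]. *)
  destruct (hc _ _ (I_of_mulV hR Hxy) (I_of_Vadd hS Hyz)) as [_ [_ E]].
  transitivity (x ⊙ sb_mulinv y ⊙ (y ⊕ (sb_addinv y ⊕ z))).
  + rewrite (sb_mulDr_absorb _ E), (opgKV (sb_mul_group X)). symmetry; apply sb_addA.
  + rewrite (opKVg (sb_add_group X)). reflexivity.
Qed.

Lemma huq_comm_iff_cond2 : huq_comm (I_of R) (I_of S) <-> cond2 R S.
Proof.
split; intro H.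
- apply cond2_centralizes, huq_comm_centralizes, H.
- apply centralizes_huq_comm; [apply I_of_sub; assumption .. |].
  apply cond2_centralizes, H.
Qed.

Lemma RxS_sub : is_sub (prod_sb (prod_sb X X) X) (RxS R S).
Proof.
unfold RxS; constructor.
- split; apply cong_refl; assumption.
- intros [[x y] z] [[x' y'] z'] [H1 H2] [H3 H4]; split; simpl in *.
  + apply (cong_add hR); assumption.
  + apply (cong_add hS); assumption.
- intros [[x y] z] [[x' y'] z'] [H1 H2] [H3 H4]; split; simpl in *.
  + apply (cong_mul hR); assumption.
  + apply (cong_mul hS); assumption.
- intros [[x y] z] [H1 H2]; split; simpl in *.
  + apply (cong_addinv hR); assumption.
  + apply (cong_addinv hS); assumption.
- intros [[x y] z] [H1 H2]; split; simpl in *.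
  + apply (cong_mulinv hR); assumption.
  + apply (cong_mulinv hS); assumption.
Qed.

Lemma smith_comm_centralizes : smith_comm R S -> centralizes (I_of R) (I_of S).
Proof.
intros [h [p [hp [p_l p_r]]]] a b Ha Hb.
assert (Ht1 : RxS R S ((a, sb_one), sb_one)) by (split; [exact Ha | apply cong_refl, hS]).
assert (Ht2 : RxS R S ((sb_one, sb_one), b))
  by (split; [apply cong_refl, hR | apply cong_sym; assumption]).
pose proof (sb_commute_hom hp
  (sb_commute_sub (h := h) (u := exist _ _ Ht1) (v := exist _ _ Ht2)
  (sb_commute_prod (sb_commute_prod (sb_commute_1r a) (sb_commute_1r sb_one))
                   (sb_commute_1l b)))) as H.
rewrite p_l, p_r in H by reflexivity. exact H.
Qed.

Lemma cond2_smith_comm : cond2 R S -> smith_comm R S.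
Proof.
intros [Hadd [Hmul Hmalcev]]. exists RxS_sub.
exists (fun t : sub_sb RxS_sub =>
          fst (fst (proj1_sig t)) ⊕ sb_addinv (snd (fst (proj1_sig t))) ⊕ snd (proj1_sig t)).
split; [| split].
- intros [[[x y] z] [Hxy Hyz]] [[[x' y'] z'] [Hxy' Hyz']]; simpl in *. split; symmetry.
  + apply (malcev_op (sb_add_group X)).
    symmetry; apply Hadd; [apply (I_of_addV hR) | apply (I_of_Vadd hS)]; assumption.
  + rewrite (Hmalcev _ _ _ (cong_mul hR Hxy Hxy') (cong_mul hS Hyz Hyz')),
      (Hmalcev _ _ _ Hxy Hyz), (Hmalcev _ _ _ Hxy' Hyz').
    apply (malcev_op (sb_mul_group X)).
    symmetry; apply Hmul; [apply (I_of_mulV hR) | apply (I_of_Vmul hS)]; assumption.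
- intros [[[x y] z] Ht]; simpl; intros ->. apply (opgKV (sb_add_group X)).
- intros [[[x y] z] Ht]; simpl; intros ->. rewrite sb_addVr. apply sb_add1l.
Qed.

End TwoCongruences.

Theorem proposition3p10 (X : skew_brace) (R S : X -> X -> Prop)
  (hR : congruence R) (hS : congruence S) :
  (huq_comm (I_of R) (I_of S) <-> cond2 R S) /\
  (cond2 R S <-> smith_comm R S) /\
  huq_eq_smith.
Proof.
split; [| split].
- apply huq_comm_iff_cond2; assumption.
- split; [apply cond2_smith_comm; assumption |].
  intro H. apply (cond2_centralizes hR hS), smith_comm_centralizes; assumption.
- intros Y R' S' hR' hS' H.
  apply (cond2_smith_comm hR' hS'), (huq_comm_iff_cond2 hR' hS'), H.
Qed.
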